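(* Let $\mathcal{N}$ be a nest in a complex Hilbert space $H$ with $\dim H\ge 2$, and let $\mathcal{A}=\mathcal{T}(\mathcal{N})$ be the associated nest algebra. Then $\operatorname{JCent}(\mathcal{A})=\operatorname{Cent}(\mathcal{A})$.
   Context: A nest is a chain $\mathcal{N}$ of closed subspaces of $H$ containing $\{0\}$ and $H$, closed under arbitrary intersections and closed linear spans. The nest algebra is $\mathcal{T}(\mathcal{N})=\{T\in\mathcal{B}(H): T(N)\subseteq N \text{ for all } N\in\mathcal{N}\}$, where $\mathcal{B}(H)$ is the algebra of bounded operators on $H$. $x\circ y=xy+yx$. $\operatorname{JCent}(\mathcal{A})$: linear $f:\mathcal{A}\to\mathcal{A}$ with $f(x\circ y)=f(x)\circ y$ for all $x,y$. $\operatorname{Cent}(\mathcal{A})$: linear $f$ with $f(xy)=f(x)y=xf(y)$ for all $x,y$. *)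

From HB Require Import structures.
From mathcomp Require Import all_boot all_order all_algebra.
From mathcomp Require Import all_classical all_reals all_analysis.
From mathcomp Require Export complex.
Import numFieldNormedType.Exports.
Set Implicit Arguments. Unset Strict Implicit. Unset Printing Implicit Defensive.
Import Order.TTheory GRing.Theory Num.Theory.
Local Open Scope classical_set_scope.
Local Open Scope ring_scope.

Section Defs.
Variable R : realType.
Variable H : normedModType R[i].

(* ip is an inner product inducing the norm of H: linear in the first
   argument, conjugate symmetric, and <x,x> = ||x||^2.  Together with
   completeness of H this makes H a complex Hilbert space. *)
Definition is_inner_product (ip : H -> H -> R[i]) : Prop :=
  [/\ forall (a : R[i]) (x y z : H), ip (a *: x + y) z = a * ip x z + ip y z,
      forall x y : H, ip y x = (ip x y)^*
    & forall x : H, ip x x = (`|x| : R[i]) ^+ 2].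

Definition dim_ge2 : Prop :=
  exists x y : H, forall a b : R[i], a *: x + b *: y = 0 -> a = 0 /\ b = 0.

(* bounded (= continuous) linear operators on H *)
Definition bounded_op (T : H -> H) : Prop :=
  (forall (a : R[i]) (x y : H), T (a *: x + y) = a *: T x + T y) /\ continuous T.

Definition closed_subspace (S : set H) : Prop :=
  [/\ S 0, (forall (a : R[i]) (x y : H), S x -> S y -> S (a *: x + y)) & closed S].

Definition closed_span (F : set (set H)) : set H :=
  \bigcap_(S in [set S | closed_subspace S /\ \bigcup_(M in F) M `<=` S]) S.

Definition nest (N : set (set H)) : Prop :=
  [/\ forall M, N M -> closed_subspace M,
      N [set 0] /\ N setT,
      forall M1 M2, N M1 -> N M2 -> M1 `<=` M2 \/ M2 `<=` M1,
      forall F, F `<=` N -> N (\bigcap_(M in F) M)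
    & forall F, F `<=` N -> N (closed_span F)].

Definition nest_algebra (N : set (set H)) : set (H -> H) :=
  [set T | bounded_op T /\ forall M x, N M -> M x -> M (T x)].

Definition op_mul (S T : H -> H) : H -> H := fun x => S (T x).
Definition op_add (S T : H -> H) : H -> H := fun x => S x + T x.
Definition op_scale (a : R[i]) (T : H -> H) : H -> H := fun x => a *: T x.
Definition op_jordan (S T : H -> H) : H -> H := op_add (op_mul S T) (op_mul T S).

(* linear maps A -> A (values outside A are irrelevant) *)
Definition linear_on (A : set (H -> H)) (f : (H -> H) -> (H -> H)) : Prop :=
  (forall x, A x -> A (f x)) /\
  (forall (a : R[i]) x y, A x -> A y ->
     f (op_add (op_scale a x) y) = op_add (op_scale a (f x)) (f y)).

Definition JCent (A : set (H -> H)) (f : (H -> H) -> (H -> H)) : Prop :=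
  linear_on A f /\
  forall x y, A x -> A y -> f (op_jordan x y) = op_jordan (f x) y.

Definition Cent (A : set (H -> H)) (f : (H -> H) -> (H -> H)) : Prop :=
  linear_on A f /\
  forall x y, A x -> A y ->
    f (op_mul x y) = op_mul (f x) y /\ f (op_mul x y) = op_mul x (f y).

End Defs.

From HB Require Import structures.
From mathcomp Require Import all_boot all_order all_algebra.
From mathcomp Require Import all_classical all_reals all_analysis.
From mathcomp Require Import complex.
From mathcomp Require Import ring lra.
Import numFieldNormedType.Exports.
Import Order.TTheory GRing.Theory Num.Theory.
Local Open Scope classical_set_scope.
Local Open Scope ring_scope.
Set Implicit Arguments. Unset Strict Implicit. Unset Printing Implicit Defensive.

(* Let f be a Jordan centralizer and c := f 1.  Evaluating f (1 o x) = c o x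
   gives 2 f x = c x + x c, and expanding f (x o y) = f x o y with this
   formula shows that every commutator [c, w], w in A, commutes with A.  The
   commutant of a nest algebra is trivial: for a nonzero y orthogonal to an
   element M of the nest, the rank-one operators u |-> <u, y> x with x in M
   lie in A, which forces any operator commuting with A to be a scalar on M,
   and these scalars agree along the chain.  So [c, w] = lam, and comparing
   [c, w^2] = 2 lam w with a scalar gives lam = 0.  Hence c is central,
   f x = c x, and f is a centralizer. *)

Section LinearOperators.
Variables (R : realType) (H : normedModType R[i]).

Definition linear_op (T : H -> H) : Prop :=
  forall (a : R[i]) (x y : H), T (a *: x + y) = a *: T x + T y.

Definition op_commutator (S T : H -> H) : H -> H := fun u => S (T u) - T (S u).

Variable T : H -> H.
Hypothesis linT : linear_op T.

Lemma linear_opD x y : T (x + y) = T x + T y.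
Proof. by have := linT 1 x y; rewrite !scale1r. Qed.

Lemma linear_op0 : T 0 = 0.
Proof. by apply: (addrI (T 0)); rewrite -linear_opD !addr0. Qed.

Lemma linear_opZ a x : T (a *: x) = a *: T x.
Proof. by have := linT a x 0; rewrite linear_op0 !addr0. Qed.

Lemma linear_opB x y : T (x - y) = T x - T y.
Proof. by rewrite -scaleN1r linear_opD linear_opZ scaleN1r. Qed.

End LinearOperators.

Section TrivialCenter.
Variables (R : realType) (H : normedModType R[i]) (A : set (H -> H)).
Hypotheses (A_linear : forall T, A T -> linear_op T) (A_id : A id).
Hypothesis A_add : forall S T, A S -> A T -> A (op_add S T).
Hypothesis A_scale : forall a T, A T -> A (op_scale a T).
Hypothesis A_mul : forall S T, A S -> A T -> A (op_mul S T).
Hypothesis A_center : forall z, A z -> (forall T, A T -> forall u, z (T u) = T (z u)) ->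
  exists mu : R[i], forall u, z u = mu *: u.
Hypothesis H_nontrivial : exists u : H, u != 0.

Lemma A_commutator S T : A S -> A T -> A (op_commutator S T).
Proof.
move=> AS AT; suff -> : op_commutator S T = op_add (op_mul S T) (op_scale (-1) (op_mul T S)).
  by apply: A_add; [exact: A_mul | apply: A_scale; exact: A_mul].
by apply: funext => u; rewrite /op_add /op_scale /op_mul scaleN1r.
Qed.

Lemma commutator_scalar_eq0 (c y : H -> H) (lam mu : R[i]) :
  linear_op c -> linear_op y ->
  (forall u, op_commutator c y u = lam *: u) ->
  (forall u, op_commutator c (op_mul y y) u = mu *: u) -> lam = 0.
Proof.
move=> lin_c lin_y hlam hmu; have [u0 u0_neq0] := H_nontrivial.
(* [c, y y] = [c, y] y + y [c, y] = 2 lam y, hence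
   2 lam [c, y] = [c, 2 lam y] = [c, mu] = 0. *)
have hy u : mu *: u = (lam + lam) *: y u.
  rewrite -hmu /op_commutator /op_mul.
  have -> : c (y (y u)) - y (y (c u)) = op_commutator c y (y u) + y (op_commutator c y u).
    by rewrite /op_commutator linear_opB // addrA subrK.
  by rewrite !hlam linear_opZ // scalerDl.
have : ((lam + lam) * lam) *: u0 = 0.
  rewrite -scalerA -hlam /op_commutator scalerBr -linear_opZ // -!hy.
  by rewrite linear_opZ // subrr.
move/eqP; rewrite scaler_eq0 (negbTE u0_neq0) orbF mulf_eq0 -mulr2n mulrn_eq0.
by rewrite orbb => /eqP.
Qed.

Lemma Cent_JCent f : Cent A f -> JCent A f.
Proof.
case=> [[fA f_lin] f_cent]; split; first by split.
move=> x y Ax Ay.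
have -> : op_jordan x y = op_add (op_scale 1 (op_mul x y)) (op_mul y x).
  by apply: funext => u; rewrite /op_jordan /op_add /op_scale scale1r.
rewrite f_lin; try exact: A_mul.
have [-> _] := f_cent x y Ax Ay; have [_ ->] := f_cent y x Ay Ax.
by apply: funext => u; rewrite /op_jordan /op_add /op_scale /op_mul scale1r.
Qed.

Section JordanCentralizer.
Variable f : (H -> H) -> (H -> H).
Hypothesis f_JCent : JCent A f.

Lemma JCent_stable x : A x -> A (f x).
Proof. by case: f_JCent => [[fA _] _]; exact: fA. Qed.

Lemma JCent_double x : A x -> forall u, f x u + f x u = f id (x u) + x (f id u).
Proof.
case: f_JCent => [[_ f_lin] f_jordan] Ax u.
have jordan_id : op_jordan id x = op_add (op_scale 1 x) x.
  by apply: funext => v; rewrite /op_jordan /op_add /op_mul /op_scale scale1r.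
have := f_jordan id x A_id Ax; rewrite jordan_id f_lin // => /(congr1 (fun g => g u)).
by rewrite /op_jordan /op_add /op_mul /op_scale scale1r.
Qed.

Lemma JCent_unit_sandwich x y : A x -> A y ->
  forall u, x (f id (y u)) + y (f id (x u)) = f id (y (x u)) + x (y (f id u)).
Proof.
case: f_JCent => [_ f_jordan] Ax Ay u.
have lin_y := A_linear Ay; have lin_c := A_linear (JCent_stable A_id).
have := JCent_double (A_add (A_mul Ax Ay) (A_mul Ay Ax)) u.
rewrite f_jordan // /op_jordan /op_add /op_mul.
rewrite addrACA -(linear_opD lin_y) !(JCent_double Ax) (linear_opD lin_y) (linear_opD lin_c).
by rewrite -!addrA => /addrI; rewrite !addrA => /addIr.
Qed.

Lemma JCent_commutator_commute w T : A w -> A T ->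
  forall u, op_commutator (f id) w (T u) = T (op_commutator (f id) w u).
Proof.
move=> Aw AT u; rewrite /op_commutator (linear_opB (A_linear AT)).
have := JCent_unit_sandwich AT Aw u.
by move/(canLR (addrK _)) <-; rewrite addrAC addrK.
Qed.

Lemma JCent_unit_commute y : A y -> forall u, f id (y u) = y (f id u).
Proof.
move=> Ay u; have Ac := JCent_stable A_id.
have central_commutator w : A w -> exists lam : R[i], forall v, op_commutator (f id) w v = lam *: v.
  move=> Aw; apply: A_center; first exact: A_commutator.
  by move=> T AT; exact: JCent_commutator_commute.
have [lam hlam] := central_commutator y Ay.
have [mu hmu] := central_commutator _ (A_mul Ay Ay).
have lam0 := commutator_scalar_eq0 (A_linear Ac) (A_linear Ay) hlam hmu.
by apply/eqP; rewrite -subr_eq0; have := hlam u; rewrite lam0 scale0r => <-.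
Qed.

Lemma JCent_unit_mul x : A x -> f x = op_mul (f id) x.
Proof.
have two_neq0 : (2 : R[i]) != 0 by rewrite pnatr_eq0.
move=> Ax; apply: funext => u; apply: (@scalerI _ H _ two_neq0).
by rewrite !scaler_nat !mulr2n JCent_double // -(JCent_unit_commute Ax u).
Qed.

Lemma JCent_Cent : Cent A f.
Proof.
split; first by case: f_JCent.
move=> x y Ax Ay; rewrite (JCent_unit_mul (A_mul Ax Ay)) (JCent_unit_mul Ax).
rewrite (JCent_unit_mul Ay); split=> //.
by apply: funext => u; rewrite /op_mul JCent_unit_commute.
Qed.

End JordanCentralizer.

Lemma JCent_iff_Cent f : JCent A f <-> Cent A f.
Proof. by split; [exact: JCent_Cent | exact: Cent_JCent]. Qed.

End TrivialCenter.

Section Subspace.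
Variables (R : realType) (H : normedModType R[i]) (S : set H).
Hypothesis hS : closed_subspace S.

Lemma subspace0 : S 0.
Proof. by case: hS. Qed.

Lemma subspaceD u v : S u -> S v -> S (u + v).
Proof. by case: hS => _ S_lin _ Su Sv; have := S_lin 1 u v Su Sv; rewrite scale1r. Qed.

Lemma subspaceZ a u : S u -> S (a *: u).
Proof. by case: hS => S0 S_lin _ Su; have := S_lin a u 0 Su S0; rewrite addr0. Qed.

End Subspace.

Section RealNorm.
Variable R : realType.

(* Norms of a normed R[i]-module live in R[i]; [nrm] is their real part, on
   which [lra]/[nra] can work. *)
Definition nrm {V : normedZmodType R[i]} (v : V) : R := complex.Re `|v|.

Lemma normE {V : normedZmodType R[i]} (v : V) : `|v| = ((nrm v)%:C)%C.
Proof.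
have := normr_ge0 v; rewrite lecE => /andP[/eqP im0 _].
by rewrite /nrm; case: `|v| im0 => a b /= ->.
Qed.

Lemma nrm_ge0 {V : normedZmodType R[i]} (v : V) : 0 <= nrm v.
Proof. by have := normr_ge0 v; rewrite normE lecR. Qed.

Lemma nrmD {V : normedZmodType R[i]} (u v : V) : nrm (u + v) <= nrm u + nrm v.
Proof. by have := ler_normD u v; rewrite !normE -rmorphD lecR. Qed.

Lemma nrm_distC {V : normedZmodType R[i]} (u v : V) : nrm (u - v) = nrm (v - u).
Proof. by rewrite /nrm distrC. Qed.

Lemma nrmZ {V : normedModType R[i]} (a : R[i]) (v : V) : nrm (a *: v) = nrm a * nrm v.
Proof. by apply: complexI; rewrite rmorphM /= -!normE normrZ. Qed.

Lemma gtc0_real (e : R[i]) : 0 < e -> exists2 r : R, 0 < r & e = (r%:C)%C.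
Proof.
rewrite ltcE => /andP[/eqP im0 re_gt0].
by exists (complex.Re e) => //; case: e im0 re_gt0 => a b /= ->.
Qed.

Lemma nrm_sub_cvg_le {V : normedModType R[i]} (F : set_system V)
    {FF : ProperFilter F} (x s0 : V) (r : R) :
  F --> s0 -> (\forall s \near F, nrm (x - s) <= r) -> nrm (x - s0) <= r.
Proof.
move=> F_s0 F_r; apply/ler_addgt0Pr => d d_gt0.
have dC_gt0 : 0 < (d%:C)%C by rewrite ltcR.
have [t [/= s0t_lt xt_le]] :=
  filter_ex (filterI (@cvgr_dist_lt _ _ _ F FF id s0 F_s0 _ dC_gt0) F_r).
rewrite normE ltcR in s0t_lt.
have := nrmD (x - t) (t - s0); rewrite addrA subrK (nrm_distC t) => xs0_le.
by apply: (le_trans xs0_le); rewrite lerD // ltW.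
Qed.

End RealNorm.

Section InnerProduct.
Variables (R : realType) (H : normedModType R[i]) (ip : H -> H -> R[i]).
Hypothesis hip : is_inner_product ip.

Lemma ipDl x y z : ip (x + y) z = ip x z + ip y z.
Proof. by case: hip => h _ _; have := h 1 x y z; rewrite scale1r mul1r. Qed.

Lemma ip0l z : ip 0 z = 0.
Proof. by apply: (addrI (ip 0 z)); rewrite -ipDl !addr0. Qed.

Lemma ipZl a x z : ip (a *: x) z = a * ip x z.
Proof. by case: hip => h _ _; have := h a x 0 z; rewrite addr0 ip0l addr0. Qed.

Lemma ipBl x y z : ip (x - y) z = ip x z - ip y z.
Proof. by rewrite -scaleN1r ipDl ipZl mulN1r. Qed.

Lemma ipC x y : ip y x = (ip x y)^*.
Proof. by case: hip. Qed.

Lemma ipDr x y z : ip x (y + z) = ip x y + ip x z.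
Proof. by rewrite ipC ipDl rmorphD /= -!ipC. Qed.

Lemma ipZr a x y : ip x (a *: y) = a^* * ip x y.
Proof. by rewrite ipC ipZl rmorphM /= -ipC. Qed.

Lemma ip0r x : ip x 0 = 0.
Proof. by rewrite ipC ip0l conjC0. Qed.

Lemma ipBr x y z : ip x (y - z) = ip x y - ip x z.
Proof. by rewrite -scaleN1r ipDr ipZr rmorphN1 mulN1r. Qed.

Lemma ipxx_norm x : ip x x = `|x| ^+ 2.
Proof. by case: hip. Qed.

Lemma ipxx x : ip x x = ((nrm x ^+ 2)%:C)%C.
Proof. by rewrite ipxx_norm normE rmorphXn. Qed.

Lemma ipxx_ge0 x : 0 <= ip x x.
Proof. by rewrite ipxx lecR exprn_ge0 ?nrm_ge0. Qed.

Lemma ipxx_eq0 x : (ip x x == 0) = (x == 0).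
Proof. by rewrite ipxx_norm expf_eq0 /= normr_eq0. Qed.

Lemma ipxx_gt0 x : x != 0 -> 0 < ip x x.
Proof. by move=> x_neq0; rewrite lt_def ipxx_eq0 x_neq0 ipxx_ge0. Qed.

Lemma ipxx_sub_proj u y : y != 0 ->
  ip (u - (ip u y / ip y y) *: y) (u - (ip u y / ip y y) *: y)
  = ip u u - ip u y * (ip u y)^* / ip y y.
Proof.
move=> y_neq0; have yy_neq0 : ip y y != 0 by rewrite ipxx_eq0.
rewrite !ipBl !ipBr !ipZl !ipZr rmorphM /= fmorphV /= -(ipC y y) (ipC u y).
by field.
Qed.

Lemma normr_ip_le u y : `|ip u y| <= `|u| * `|y|.
Proof.
have [->|y_neq0] := eqVneq y 0; first by rewrite ip0r !normr0 mulr0.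
have yy_gt0 := ipxx_gt0 y_neq0.
have := ipxx_ge0 (u - (ip u y / ip y y) *: y).
rewrite ipxx_sub_proj // subr_ge0 ler_pdivrMr // => h.
rewrite -(@ler_pXn2r _ 2) ?nnegrE ?mulr_ge0 //.
by rewrite normCK exprMn -!ipxx_norm.
Qed.

Lemma parallelogram (u v : H) :
  nrm (u + v) ^+ 2 + nrm (u - v) ^+ 2 = 2 * nrm u ^+ 2 + 2 * nrm v ^+ 2.
Proof.
apply: complexI; rewrite !rmorphD !rmorphM /= rmorph_nat -!normE -!expr2 -!ipxx_norm.
by rewrite !ipBl !ipBr !ipDl !ipDr; ring.
Qed.

Lemma ip_continuousl y : continuous (fun u : H => ip u y : R[i]^o).
Proof.
move=> u; apply/cvgrPdist_lt => e e_gt0.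
have ny1_gt0 : 0 < `|y| + 1 by rewrite ltr_wpDl.
near=> v; rewrite -ipBl (le_lt_trans (normr_ip_le _ _)) //.
apply: (le_lt_trans (y := `|u - v| * (`|y| + 1))).
  by rewrite ler_wpM2l // lerDl.
rewrite -ltr_pdivlMr //; near: v.
by apply: cvgr_dist_lt; [exact: cvg_id | rewrite divr_gt0].
Unshelve. all: by end_near.
Qed.

Lemma nearest_point_orthogonal S x s0 : closed_subspace S -> S s0 ->
    (forall s, S s -> ip (x - s0) (x - s0) <= ip (x - s) (x - s)) ->
  forall t, S t -> ip t (x - s0) = 0.
Proof.
move=> hS Ss0 s0_min t St; have [->|t_neq0] := eqVneq t 0; first by rewrite ip0l.
set y := x - s0; suff yt0 : ip y t = 0 by rewrite ipC yt0 conjC0.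
have tt_gt0 := ipxx_gt0 t_neq0.
have := s0_min _ (subspaceD hS Ss0 (subspaceZ hS (ip y t / ip t t) St)).
rewrite opprD addrA -/y ipxx_sub_proj // -subr_ge0 addrAC subrr add0r oppr_ge0.
move=> le0; have ge0 : 0 <= ip y t * (ip y t)^* / ip t t.
  by rewrite divr_ge0 ?mul_conjC_ge0 // ltW.
have : ip y t * (ip y t)^* / ip t t == 0 by rewrite eq_le le0 ge0.
by rewrite mulf_eq0 invr_eq0 (gt_eqF tt_gt0) orbF mul_conjC_eq0 => /eqP.
Qed.

End InnerProduct.

Section NearestPoint.
Variables (R : realType) (H : completeNormedModType R[i]) (ip : H -> H -> R[i]).
Hypothesis hip : is_inner_product ip.
Variables (S : set H) (x : H).
Hypothesis hS : closed_subspace S.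

Let dists := [set nrm (x - s) ^+ 2 | s in S].

Let dists_has_inf : has_inf dists.
Proof.
split; first by exists (nrm (x - 0) ^+ 2), 0 => //; exact: subspace0.
by exists 0 => _ [s _ <-]; rewrite exprn_ge0 ?nrm_ge0.
Qed.

Let dist2_ge0 : 0 <= inf dists.
Proof.
by case: dists_has_inf => ne _; apply: lb_le_inf ne _ => _ [s _ <-]; rewrite exprn_ge0 ?nrm_ge0.
Qed.

Let dist2_le s : S s -> inf dists <= nrm (x - s) ^+ 2.
Proof. by move=> Ss; apply: ge_inf; [case: dists_has_inf | exists s]. Qed.

Let dist2_approx e : 0 < e -> exists2 s, S s & nrm (x - s) ^+ 2 < inf dists + e.
Proof. by move=> e_gt0; have [_ [s Ss <-]] := inf_adherent e_gt0 dists_has_inf; exists s. Qed.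

Let near_minimizers_close e s t : S s -> S t ->
  nrm (x - s) ^+ 2 < inf dists + e -> nrm (x - t) ^+ 2 < inf dists + e ->
  nrm (s - t) ^+ 2 < 4 * e.
Proof.
move=> Ss St xs_lt xt_lt; pose m := 2^-1 *: (s + t).
have Sm : S m by apply: subspaceZ => //; exact: subspaceD.
have sum_eq : (x - s) + (x - t) = 2 *: (x - m).
  rewrite /m scalerBr scalerA mulfV ?pnatr_eq0 // scale1r scaler_nat mulr2n.
  by rewrite opprD !addrA; congr (_ - _); rewrite addrAC.
have diff_eq : (x - s) - (x - t) = t - s by rewrite opprB addrC addrA subrK.
have nrm2 : nrm (2 : R[i]) = 2 by apply: complexI; rewrite -normE normr_nat rmorph_nat.
have := parallelogram hip (x - s) (x - t).
rewrite sum_eq diff_eq nrmZ nrm2 (nrm_distC t) exprMn.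
have := dist2_le Sm; have := nrm_ge0 (x - m); nra.
Qed.

Let nearest_dist2 : exists2 s0, S s0 & nrm (x - s0) ^+ 2 = inf dists.
Proof.
pose B e := [set s | S s /\ nrm (x - s) ^+ 2 < inf dists + e].
pose F := filter_from [set e : R | 0 < e] B.
have F_proper : ProperFilter F.
  apply: filter_from_proper; last by move=> e /dist2_approx [s Ss lt_s]; exists s.
  apply: filter_from_filter; first by exists 1 => /=.
  move=> e1 e2 e1_gt0 e2_gt0; exists (Order.min e1 e2); first by rewrite /= lt_min e1_gt0 e2_gt0.
  move=> s [Ss lt_s]; split; split=> //; apply: (lt_le_trans lt_s).
    by rewrite lerD2l ge_min lexx.
  by rewrite lerD2l ge_min lexx orbT.
have F_cauchy : cauchy F.
  apply/cauchyP => _ /gtc0_real [r r_gt0 ->].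
  have e_gt0 : 0 < r ^+ 2 / 4 by rewrite divr_gt0 // exprn_gt0.
  have [s0 Ss0 lt_s0] := dist2_approx e_gt0.
  exists s0, (r ^+ 2 / 4) => // t [St lt_t].
  rewrite -ball_normE /ball_ /= normE ltcR.
  have := near_minimizers_close Ss0 St lt_s0 lt_t; have := nrm_ge0 (s0 - t).
  rewrite mulrC mulfVK ?pnatr_eq0 //; nra.
have F_cvg : F --> lim F := @cauchy_cvg _ F F_proper F_cauchy.
have S_lim : S (lim F).
  case: hS => _ _ S_closed.
  apply: (@closed_cvg _ _ F F_proper id S S_closed) => //.
  by exists 1 => [|s []] //=; exact: ltr01.
exists (lim F) => //; apply/eqP; rewrite eq_le dist2_le // andbT.
apply/ler_addgt0Pr => e e_gt0.
have de_ge0 : 0 <= inf dists + e by rewrite addr_ge0 // ltW.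
have : nrm (x - lim F) <= Num.sqrt (inf dists + e).
  apply: nrm_sub_cvg_le F_cvg _; exists e => // s [_ lt_s].
  rewrite -(ger0_norm (nrm_ge0 (x - s))) -sqrtr_sqr.
  by apply: ler_wsqrtr; exact: ltW.
have := sqr_sqrtr de_ge0; have := sqrtr_ge0 (inf dists + e).
have := nrm_ge0 (x - lim F); nra.
Qed.

Lemma nearest_point_exists :
  exists2 s0, S s0 & forall s, S s -> ip (x - s0) (x - s0) <= ip (x - s) (x - s).
Proof.
have [s0 Ss0 eq_s0] := nearest_dist2; exists s0 => // s Ss.
by rewrite !(ipxx hip) lecR eq_s0 dist2_le.
Qed.

Lemma orthogonal_vector_exists : ~ S x -> exists2 y, y != 0 & forall s, S s -> ip s y = 0.
Proof.
move=> nSx; have [s0 Ss0 s0_min] := nearest_point_exists.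
exists (x - s0); last exact: nearest_point_orthogonal s0_min.
by rewrite subr_eq0; apply: contraPneq nSx => ->.
Qed.

End NearestPoint.

Section NestAlgebra.
Variables (R : realType) (H : normedModType R[i]) (N : set (set H)).
Hypothesis hN : nest N.

Lemma nest_algebra_linear T : nest_algebra N T -> linear_op T.
Proof. by case=> [[]]. Qed.

Lemma nest_algebra_id : nest_algebra N id.
Proof. by split=> //; split=> // x; exact: cvg_id. Qed.

Lemma nest_algebra_add S T : nest_algebra N S -> nest_algebra N T -> nest_algebra N (op_add S T).
Proof.
case: hN => N_subspace _ _ _ _ [[S_lin S_cont] S_inv] [[T_lin T_cont] T_inv].
split; first split.
- by move=> a x y; rewrite /op_add S_lin T_lin scalerDr addrACA.
- by move=> x; exact: (continuousD (S_cont x) (T_cont x)).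
- by move=> M x NM Mx; exact: (subspaceD (N_subspace M NM) (S_inv M x NM Mx) (T_inv M x NM Mx)).
Qed.

Lemma nest_algebra_scale a T : nest_algebra N T -> nest_algebra N (op_scale a T).
Proof.
case: hN => N_subspace _ _ _ _ [[T_lin T_cont] T_inv].
split; first split.
- by move=> b x y; rewrite /op_scale T_lin scalerDr !scalerA mulrC.
- by move=> x; apply: continuousZ; [exact: cvg_cst | exact: T_cont].
- by move=> M x NM Mx; exact: (subspaceZ (N_subspace M NM) a (T_inv M x NM Mx)).
Qed.

Lemma nest_algebra_mul S T : nest_algebra N S -> nest_algebra N T -> nest_algebra N (op_mul S T).
Proof.
move=> [[S_lin S_cont] S_inv] [[T_lin T_cont] T_inv]; split; first split.
- by move=> a x y; rewrite /op_mul T_lin S_lin.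
- by move=> x; apply: continuous_comp; [exact: T_cont | exact: S_cont].
- by move=> M x NM Mx; apply: S_inv => //; exact: T_inv.
Qed.

End NestAlgebra.

Lemma closed_span_sub (R : realType) (H : normedModType R[i]) (F : set (set H)) (S : set H) :
  closed_subspace S -> (forall M, F M -> M `<=` S) -> closed_span F `<=` S.
Proof. by move=> hS FS u Fu; apply: Fu; split=> // v [M FM Mv]; exact: FS M FM v Mv. Qed.

Lemma sub_closed_span (R : realType) (H : normedModType R[i]) (F : set (set H)) M :
  F M -> M `<=` closed_span F.
Proof. by move=> FM u Mu S [_ FS]; apply: FS; exists M. Qed.

Lemma eigenspace_closed_subspace (R : realType) (H : normedModType R[i]) (T : H -> H) mu :
  bounded_op T -> closed_subspace [set u | T u = mu *: u].
Proof.
case=> T_lin T_cont; split.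
- by rewrite /= linear_op0 // scaler0.
- by move=> a u v /= Tu Tv; rewrite T_lin Tu Tv scalerDr !scalerA mulrC.
have -> : [set u | T u = mu *: u] = (fun u => T u - mu *: u) @^-1` [set 0].
  apply/seteqP; split=> u /= Tu; first by rewrite Tu subrr.
  by apply/eqP; rewrite -subr_eq0 Tu.
apply: preimage_closed; last exact/accessible_closed_set1/hausdorff_accessible/norm_hausdorff.
move=> u _; apply: (@continuousB _ _ _ T (fun v => mu *: v)); first exact: T_cont.
by apply: (@continuousZ _ _ _ (fun=> mu) id); [exact: cst_continuous | exact: cvg_id].
Qed.

Section RankOne.
Variables (R : realType) (H : normedModType R[i]) (ip : H -> H -> R[i]).
Hypothesis hip : is_inner_product ip.

Definition rank_one (x y : H) : H -> H := fun u => ip u y *: x.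

Lemma rank_one_bounded x y : bounded_op (rank_one x y).
Proof.
split; first by move=> a u v; rewrite /rank_one ipDl // ipZl // scalerDl scalerA.
by move=> u; apply: continuousZ; [exact: ip_continuousl | exact: cvg_cst].
Qed.

Lemma rank_one_nest_algebra N x y : nest N ->
    (forall M, N M -> M x \/ forall u, M u -> ip u y = 0) ->
  nest_algebra N (rank_one x y).
Proof.
case=> N_subspace _ _ _ _ hxy; split; first exact: rank_one_bounded.
move=> M u NM Mu; rewrite /rank_one; case: (hxy M NM) => [Mx | y_perp].
  exact: (subspaceZ (N_subspace M NM) _ Mx).
by rewrite y_perp // scale0r; exact: (subspace0 (N_subspace M NM)).
Qed.

Lemma commute_rank_one z x y : linear_op z -> y != 0 ->
    (forall u, z (rank_one x y u) = rank_one x y (z u)) ->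
  z x = (ip (z y) y / ip y y) *: x.
Proof.
move=> z_lin y_neq0 z_comm; have yy_neq0 : ip y y != 0 by rewrite ipxx_eq0.
have := z_comm y; rewrite /rank_one linear_opZ // => zx_eq.
by rewrite -mulrC -scalerA -zx_eq scalerA mulVf // scale1r.
Qed.

End RankOne.

Section NestCommutant.
Variables (R : realType) (H : completeNormedModType R[i]) (ip : H -> H -> R[i]).
Hypothesis hip : is_inner_product ip.
Variables (N : set (set H)) (z : H -> H).
Hypotheses (hN : nest N) (z_bounded : bounded_op z).
Hypothesis z_commute : forall T, nest_algebra N T -> forall u, z (T u) = T (z u).

Let z_lin : linear_op z := proj1 z_bounded.

Let z_scalar_on_perp M y : N M -> y != 0 -> (forall u, M u -> ip u y = 0) ->
  forall x, M x -> z x = (ip (z y) y / ip y y) *: x.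
Proof.
have [_ _ N_chain _ _] := hN; move=> NM y_neq0 y_perp x Mx.
apply: (commute_rank_one hip z_lin y_neq0) => u; apply: z_commute.
apply: (rank_one_nest_algebra hip hN) => M' NM'.
case: (N_chain M M' NM NM') => sub; first by left; exact: sub.
by right => v /sub; exact: y_perp.
Qed.

Let z_scalar_on_proper M : N M -> M <> setT -> exists mu, forall x, M x -> z x = mu *: x.
Proof.
have [N_subspace _ _ _ _] := hN; move=> NM M_neqT.
have /setTPn [x nMx] : M != setT by apply/eqP.
have [y y_neq0 y_perp] := orthogonal_vector_exists hip (N_subspace M NM) nMx.
by exists (ip (z y) y / ip y y); exact: z_scalar_on_perp.
Qed.

Let z_scalar_on_proper_uniform :
  exists mu, forall M, N M /\ M <> setT -> M `<=` [set u | z u = mu *: u].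
Proof.
have [_ _ N_chain _ _] := hN.
have [[M0 [NM0 M0_neqT] [x0 M0x0 x0_neq0]] | all_zero] :=
  pselect (exists2 M0, N M0 /\ M0 <> setT & exists2 x0, M0 x0 & x0 != 0).
  have [mu0 mu0_M0] := z_scalar_on_proper NM0 M0_neqT.
  exists mu0 => M [NM M_neqT] u Mu; have [mu mu_M] := z_scalar_on_proper NM M_neqT.
  case: (N_chain M M0 NM NM0) => sub; first exact: mu0_M0 (sub _ Mu).
  suff -> : mu0 = mu by exact: mu_M.
  have /eqP := etrans (esym (mu0_M0 _ M0x0)) (mu_M _ (sub _ M0x0)).
  by rewrite -subr_eq0 -scalerBl scaler_eq0 (negbTE x0_neq0) orbF subr_eq0 => /eqP.
exists 0 => M PM u Mu; have -> : u = 0.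
  by apply/eqP; apply: contrapT => /negP u_neq0; apply: all_zero; exists M => //; exists u.
by rewrite /= linear_op0 // scaler0.
Qed.

Lemma nest_commutant_scalar : exists mu : R[i], forall u, z u = mu *: u.
Proof.
have [N_subspace _ _ _ N_span] := hN.
pose proper := [set M | N M /\ M <> setT].
(* Either a nonzero vector is orthogonal to every proper element of the nest,
   or z is one scalar on all of them, hence on their closed span H. *)
have [L_eqT | L_neqT] := pselect (closed_span proper = setT); last first.
  have NL : N (closed_span proper) by apply: N_span => M [].
  have /setTPn [x nLx] : closed_span proper != setT by apply/eqP.
  have [y y_neq0 y_perp] := orthogonal_vector_exists hip (N_subspace _ NL) nLx.
  exists (ip (z y) y / ip y y) => u.
  apply: (commute_rank_one hip z_lin y_neq0) => v; apply: z_commute.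
  apply: (rank_one_nest_algebra hip hN) => M NM.
  have [-> | M_neqT] := pselect (M = setT); first by left.
  by right => w Mw; apply: y_perp; exact: (sub_closed_span (conj NM M_neqT)).
have [mu mu_proper] := z_scalar_on_proper_uniform.
exists mu => u; apply: (closed_span_sub (eigenspace_closed_subspace mu z_bounded) mu_proper).
by rewrite L_eqT.
Qed.

End NestCommutant.

Theorem corollary3p9 (R : realType) (H : completeNormedModType R[i])
  (ip : H -> H -> R[i]) (hip : is_inner_product ip) (hdim : dim_ge2 H)
  (N : set (set H)) (hN : nest N) :
  forall f : (H -> H) -> (H -> H),
    JCent (nest_algebra N) f <-> Cent (nest_algebra N) f.
Proof.
have H_nontrivial : exists u : H, u != 0.
  have [x [y xy_free]] := hdim; exists x; apply/eqP => x0.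
  have [|/eqP] := xy_free 1 0; first by rewrite x0 scaler0 scale0r addr0.
  by rewrite oner_eq0.
have center_scalar z : nest_algebra N z ->
    (forall T, nest_algebra N T -> forall u, z (T u) = T (z u)) ->
  exists mu : R[i], forall u, z u = mu *: u.
  by move=> [z_bounded _]; exact: (nest_commutant_scalar hip hN z_bounded).
exact: (JCent_iff_Cent (@nest_algebra_linear _ _ N) (nest_algebra_id N)
  (nest_algebra_add hN) (nest_algebra_scale hN) (@nest_algebra_mul _ _ N)
  center_scalar H_nontrivial).
Qed.
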